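(* Let $m,k\ge1$, $\mathbf T\in M(m,k)$ and $\sigma$ a permutation of $\mathrm{Range}(\mathbf T)$ such that the $(\mathbf T,\sigma)$-graph is connected. Let $a(\sigma)$ be the number of $q\in\mathrm{Range}(\mathbf T)$ with $\sigma(q)\ne q$. Then \[ km-|\mathbf T|+a(\sigma)\ge m-1+\mathbf 1[\sigma\ne \mathrm{id}]. \]
   Context: $[p]=\{1,\dots,p\}$. $M(m,k)$ is the set of tuples $\mathbf T=(T_1,\dots,T_m)$ with each $T_i=(T_{i,1},\dots,T_{i,k})\in[km]^k$ having pairwise distinct entries; $\mathrm{Range}(\mathbf T)=\{T_{i,j}\}$ and $|\mathbf T|=|\mathrm{Range}(\mathbf T)|$. For a permutation $\sigma$ of $\mathrm{Range}(\mathbf T)$, the $(\mathbf T,\sigma)$-graph has vertex set $\{(i,j):i\in[m],j\in[k]\}$, with a black edge between $(i,j)$ and $(i,j+1)$ ($j\le k-1$), a solid red edge between distinct $(i,j),(i',j')$ with $T_{i,j}=T_{i',j'}$, and a dotted red edge between $(i,j),(i',j')$ with $T_{i,j}\neq T_{i',j'}$ and $\sigma(T_{i,j})=T_{i',j'}$ or $\sigma(T_{i',j'})=T_{i,j}$. *)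

From mathcomp Require Import all_boot all_order all_fingroup.
Set Implicit Arguments. Unset Strict Implicit. Unset Printing Implicit Defensive.

(* [p] = {1..p} is modelled by 'I_p = {0..p-1} (shift by one).
   A tuple T = (T_1..T_m) with T_i in [km]^k is a function
   T : 'I_m -> 'I_k -> 'I_(k*m); T_{i,j} = T i j. *)

Definition in_M (m k : nat) (T : 'I_m -> 'I_k -> 'I_(k * m)) : Prop :=
  forall i : 'I_m, injective (T i).

Definition Range (m k : nat) (T : 'I_m -> 'I_k -> 'I_(k * m)) : {set 'I_(k * m)} :=
  [set T ij.1 ij.2 | ij : 'I_m * 'I_k].

(* Edges of the (T,sigma)-graph on vertices (i,j).
   A permutation sigma of Range(T) is represented by a permutation of 'I_(km)
   supported on Range(T) (perm_on (Range T) sigma). *)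
Definition black_edge (m k : nat) (u v : 'I_m * 'I_k) : bool :=
  (u.1 == v.1) && ((u.2.+1 == v.2 :> nat) || (v.2.+1 == u.2 :> nat)).

Definition solid_red_edge (m k : nat) (T : 'I_m -> 'I_k -> 'I_(k * m))
  (u v : 'I_m * 'I_k) : bool :=
  (u != v) && (T u.1 u.2 == T v.1 v.2).

Definition dotted_red_edge (m k : nat) (T : 'I_m -> 'I_k -> 'I_(k * m))
  (sigma : {perm 'I_(k * m)}) (u v : 'I_m * 'I_k) : bool :=
  (T u.1 u.2 != T v.1 v.2) &&
  ((sigma (T u.1 u.2) == T v.1 v.2) || (sigma (T v.1 v.2) == T u.1 u.2)).

Definition graph_edge (m k : nat) (T : 'I_m -> 'I_k -> 'I_(k * m))
  (sigma : {perm 'I_(k * m)}) : rel ('I_m * 'I_k) :=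
  fun u v => [|| black_edge u v, solid_red_edge T u v | dotted_red_edge T sigma u v].

Definition graph_connected (m k : nat) (T : 'I_m -> 'I_k -> 'I_(k * m))
  (sigma : {perm 'I_(k * m)}) : Prop :=
  forall u v : 'I_m * 'I_k, connect (graph_edge T sigma) u v.

Definition a_sigma (m k : nat) (T : 'I_m -> 'I_k -> 'I_(k * m))
  (sigma : {perm 'I_(k * m)}) : nat :=
  #|[set q in Range T | sigma q != q]|.

From mathcomp Require Import all_boot all_order all_fingroup.
From mathcomp Require Import zify.
Set Implicit Arguments. Unset Strict Implicit. Unset Printing Implicit Defensive.

(* Build an auxiliary graph H on the vertex set rows ⊔ values,
   i.e. 'I_m + 'I_(km).  Its edges are the km "row edges" {i, T_{i,j}}, plus
   one edge {q, σ q} for every point q moved by σ except one chosen point q0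
   (so a(σ) - 1 edges when σ ≠ id, and none when σ = id).  The missing step
   q0 — σ q0 is still realised in H by walking around the rest of the σ-cycle
   of q0.  Hence every edge of the (T,σ)-graph joins vertices whose rows are
   connected in H, and connectivity of the (T,σ)-graph puts the m rows and
   the |Range T| values in a single component of H.  A connected set of n
   vertices needs at least n - 1 edges, so
       m + |Range T| - 1 <= km + a(σ) - 1[σ ≠ id],
   which is the claim. *)

Section EdgeCounting.
Variable V : finType.

Definition edge_rel (es : seq (V * V)) : rel V :=
  fun u v => ((u, v) \in es) || ((v, u) \in es).

Lemma edge_connect_sym es : connect_sym (edge_rel es).
Proof. by apply: sym_connect_sym => u v; rewrite /edge_rel orbC. Qed.

Lemma connect_edge_cons a b es x y : connect (edge_rel ((a, b) :: es)) x y ->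
  connect (edge_rel es) x y ||
  ((connect (edge_rel es) x a || connect (edge_rel es) x b) &&
   (connect (edge_rel es) y a || connect (edge_rel es) y b)).
Proof.
set C := connect (edge_rel es); have Csym := edge_connect_sym es.
move/connectP=> [p Hp ->] {y}.
elim: p x Hp => [|z p IH] x /=; first by rewrite /C connect0.
case/andP=> Exz /IH; set y := last z p.
have [Cxz | /andP[Hx Hz]] :
    C x z \/ ((x == a) || (x == b)) && ((z == a) || (z == b)).
  move: Exz; rewrite /edge_rel !in_cons !xpair_eqE.
  case/orP=> /orP[/andP[-> ->]|E]; rewrite ?orbT; try by right.
    by left; apply: connect1; rewrite /edge_rel E.
  by left; apply: connect1; rewrite /edge_rel E orbT.
  by rewrite /C !(same_connect Csym Cxz).
have -> : C x a || C x b by case/orP: Hx => /eqP->; rewrite /C connect0 ?orbT.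
case/orP=> [Czy|/andP[_ ->]]; last by rewrite orbT.
by rewrite /C Csym in Czy; case/orP: Hz => /eqP Ez; rewrite /C -Ez Czy !orbT.
Qed.

(* Each edge merges at most two components: some set S of pairwise
   disconnected vertices has #|V| <= #|S| + size es. *)
Lemma components_bound es : exists S : {set V}, #|V| <= #|S| + size es /\
  {in S &, forall x y, connect (edge_rel es) x y -> x = y}.
Proof.
elim: es => [|[a b] es [S [HS HSc]]].
  exists setT; rewrite cardsT addn0; split=> // x y _ _.
  by move/connectP=> [[|z p]] //= _ ->.
have Csym := edge_connect_sym es.
pose Ca := [set s | connect (edge_rel es) s a].
exists (S :\: Ca); split.
  have : #|S :&: Ca| <= 1.
    apply/card_le1_eqP => x y; rewrite !inE => /andP[Hx Hxa] /andP[Hy Hya].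
    by apply: HSc => //; rewrite (same_connect Csym Hya) Csym.
  move: HS; rewrite -(cardsID Ca S) /=; lia.
move=> x y; rewrite !inE => /andP[Hxa Hx] /andP[Hya Hy] /connect_edge_cons.
case/orP => [|/andP[]]; first exact: HSc.
rewrite (negbTE Hxa) (negbTE Hya) /= => Hxb Hyb.
by apply: HSc => //; rewrite (same_connect Csym Hxb) Csym.
Qed.

Lemma connected_set_card es (A : {set V}) :
  {in A &, forall x y, connect (edge_rel es) x y} -> #|A| <= (size es).+1.
Proof.
move=> HA; have [S [HS HSc]] := components_bound es.
have HSA : #|S :&: A| <= 1.
  apply/card_le1_eqP => x y; rewrite !inE => /andP[Hx Hxa] /andP[Hy Hya].
  by apply: HSc => //; apply: HA.
have HSCA : #|S :\: A| <= #|~: A|.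
  by apply: subset_leq_card; apply/subsetP=> x; rewrite !inE => /andP[].
have := cardsID A S; have := cardsC A; lia.
Qed.
End EdgeCounting.

Lemma connect_lift (X W : finType) (e : rel X) (e' : rel W) (f : X -> W) :
  (forall x y, e x y -> connect e' (f x) (f y)) ->
  forall x y, connect e x y -> connect e' (f x) (f y).
Proof.
move=> He x y /connectP[p Hp ->] {y}.
elim: p x Hp => [|z p IH] x /=; first by rewrite connect0.
by case/andP=> /He Hxz /IH; apply: connect_trans.
Qed.

Section PermCycle.
Variables (X : finType) (R : rel X).
Hypotheses (Rrefl : reflexive R) (Rsym : symmetric R) (Rtrans : transitive R).

(* If an equivalence relates every point to its image under a permutation
   except possibly at q0, it relates q0 to its image too: follow the cycle
   from s q0 around back to q0. *)
Lemma perm_cycle_closes (s : {perm X}) q0 :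
  (forall q, q != q0 -> R q (s q)) -> R q0 (s q0).
Proof.
move=> Rstep.
have iter_step j : R (s q0) ((s ^+ j.+1)%g q0) \/ R (s q0) q0.
  elim: j => [|j [IH|IH]]; [by left; rewrite expg1; apply: Rrefl | | by right].
  case: (eqVneq ((s ^+ j.+1)%g q0) q0) => [E|NE]; first by right; rewrite E in IH.
  by left; rewrite expgSr permM; exact: (Rtrans IH (Rstep _ NE)).
have := iter_step (#[s]%g).-1; rewrite prednK ?order_gt0 // expg_order perm1.
by rewrite Rsym => -[].
Qed.
End PermCycle.

Section AuxiliaryGraph.
Variables (m k : nat) (T : 'I_m -> 'I_k -> 'I_(k * m)) (sigma : {perm 'I_(k * m)}).

Local Notation vertex := ('I_m + 'I_(k * m))%type.

Definition row_edges : seq (vertex * vertex) :=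
  [seq (inl ij.1, inr (T ij.1 ij.2)) | ij : 'I_m * 'I_k].

Definition cycle_edges (P : {set 'I_(k * m)}) : seq (vertex * vertex) :=
  [seq (inr q, inr (sigma q)) | q <- enum P].

Lemma row_value_connect es (ij : 'I_m * 'I_k) : {subset row_edges <= es} ->
  connect (edge_rel es) (inl ij.1) (inr (T ij.1 ij.2)).
Proof.
move=> Hrow; apply: connect1; apply/orP; left; apply: Hrow.
by apply/mapP; exists ij; rewrite ?mem_enum.
Qed.

Lemma graph_edge_rows es : {subset row_edges <= es} ->
  (forall q, sigma q != q -> connect (edge_rel es) (inr q) (inr (sigma q))) ->
  forall u v, graph_edge T sigma u v -> connect (edge_rel es) (inl u.1) (inl v.1).
Proof.
move=> Hrow Hcyc u v; have Csym := edge_connect_sym es.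
have Hu := row_value_connect u Hrow; have Hv := row_value_connect v Hrow.
rewrite Csym in Hv.
case/or3P.
- by case/andP=> /eqP->.
- by case/andP=> _ /eqP Euv; rewrite Euv in Hu; exact: connect_trans Hu Hv.
case/andP=> Nuv /orP[/eqP Euv|/eqP Evu].
  apply: connect_trans Hu (connect_trans _ Hv); rewrite -Euv.
  by apply: Hcyc; rewrite Euv eq_sym.
apply: connect_trans Hu (connect_trans _ Hv); rewrite -Evu Csym.
by apply: Hcyc; rewrite Evu.
Qed.

Lemma rows_values_bound (P : {set 'I_(k * m)}) : 1 <= m -> 1 <= k ->
  graph_connected T sigma ->
  (forall q, sigma q != q ->
     connect (edge_rel (row_edges ++ cycle_edges P)) (inr q) (inr (sigma q))) ->
  m + #|Range T| <= (k * m + #|P|).+1.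
Proof.
move=> Hm Hk Hconn Hcyc; set es := row_edges ++ cycle_edges P.
have Hrow : {subset row_edges <= es} by move=> e He; rewrite mem_cat He.
pose A : {set vertex} := (inl @: [set: 'I_m]) :|: (inr @: Range T).
have cardA : #|A| = m + #|Range T|.
  rewrite cardsU (card_imset _ inl_inj) (card_imset _ inr_inj) cardsT card_ord.
  rewrite disjoint_setI0 ?cards0 ?subn0 // disjoints_subset.
  apply/subsetP=> _ /imsetP[i _ ->].
  by rewrite inE; apply/imsetP=> -[].
pose r0 : 'I_m := Ordinal Hm; pose j0 : 'I_k := Ordinal Hk.
have to_r0 x : x \in A -> connect (edge_rel es) x (inl r0).
  have rows := connect_lift (graph_edge_rows Hrow Hcyc).
  case/setUP=> /imsetP[y Hy ->].
    exact: rows (Hconn (y, j0) (r0, j0)).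
  case/imsetP: Hy => ij _ ->.
  apply: connect_trans (rows ij (r0, j0) (Hconn _ _)).
  by rewrite edge_connect_sym; exact: row_value_connect.
have := connected_set_card (fun x y Hx Hy => connect_trans (to_r0 x Hx)
          (etrans (edge_connect_sym _ _ _) (to_r0 y Hy))).
rewrite cardA size_cat !size_map -cardE -enumT -cardT card_prod.
by rewrite (card_ord m) (card_ord k) [m * k]mulnC.
Qed.

Definition moved_except (q0 : 'I_(k * m)) : {set 'I_(k * m)} :=
  [set q | sigma q != q] :\ q0.

Lemma card_moved_except q0 : sigma q0 != q0 ->
  #|[set q | sigma q != q]| = (#|moved_except q0|).+1.
Proof. by move=> Hq0; rewrite (cardsD1 q0) inE Hq0. Qed.

Lemma moved_points_connected q0 q : sigma q != q ->
  connect (edge_rel (row_edges ++ cycle_edges (moved_except q0))) (inr q) (inr (sigma q)).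
Proof.
pose R x y :=
  connect (edge_rel (row_edges ++ cycle_edges (moved_except q0))) (inr x) (inr y).
have step q1 : q1 != q0 -> R q1 (sigma q1).
  move=> Nq; case: (eqVneq (sigma q1) q1) => [->|Mq]; first exact: connect0.
  apply: connect1; apply/orP; left; rewrite mem_cat; apply/orP; right.
  by apply/mapP; exists q1; rewrite ?mem_enum // !inE Nq Mq.
have close : R q0 (sigma q0).
  apply: perm_cycle_closes step => [x|x y|x y z].
  - exact: connect0.
  - exact: edge_connect_sym.
  - exact: connect_trans.
by move=> _; case: (eqVneq q q0) => [->|/step].
Qed.
End AuxiliaryGraph.

Lemma a_sigma_support m k (T : 'I_m -> 'I_k -> 'I_(k * m)) (sigma : {perm 'I_(k * m)}) :
  perm_on (Range T) sigma -> a_sigma T sigma = #|[set q | sigma q != q]|.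
Proof.
move=> Hon; apply: eq_card => q; rewrite !inE andb_idl // => Hq.
by apply: (subsetP Hon); rewrite inE.
Qed.

Theorem mainTheorem7 (m k : nat) (T : 'I_m -> 'I_k -> 'I_(k * m))
  (sigma : {perm 'I_(k * m)}) :
  1 <= m -> 1 <= k -> in_M T -> perm_on (Range T) sigma ->
  graph_connected T sigma ->
  m - 1 + (sigma != 1%g) <= k * m - #|Range T| + a_sigma T sigma.
Proof.
move=> Hm Hk _ Hon Hconn.
have HR : #|Range T| <= k * m by have := max_card (Range T); rewrite card_ord.
rewrite (a_sigma_support Hon).
case: (pickP [pred q | sigma q != q]) => [q0 /= Hq0 | fixed].
  have := rows_values_bound Hm Hk Hconn (@moved_points_connected m k T sigma q0).
  rewrite (card_moved_except Hq0).
  have -> : sigma != 1%g by apply: contraNneq Hq0 => ->; rewrite perm1.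
  rewrite /=; lia.
have id_sigma : sigma = 1%g.
  by apply/permP=> q; rewrite perm1; apply/eqP/negbFE/fixed.
have := @rows_values_bound m k T sigma set0 Hm Hk Hconn.
rewrite cards0 id_sigma eqxx => bound.
have : m + #|Range T| <= (k * m + 0).+1 by apply: bound => q; rewrite perm1 eqxx.
lia.
Qed.
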